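(* Let $(M,d,X,C)$ be a metric coordinate system, and suppose every closed ball of $(X,d)$ is compact. Then the identity map $(X,d)\to(X,d_C)$ is a homeomorphism; in particular $(X,d_C)$ is locally compact.
   Context: A metric coordinate system is a quadruple $(M,d,X,C)$ where $(M,d)$ is a metric space, $X\subset M$, and $C\subset M$ is such that for all $x,y\in X$ with $x\neq y$ there is $c\in C$ with $d(x,c)\neq d(y,c)$. For $x\in X$, $c\in C$, $x_c:=d(x,c)$, and $d_C(x,y):=\sup_{c\in C}|x_c-y_c|$ is a metric on $X$. Closed balls of $(X,d)$ are sets $\{x\in X:d(x,x_0)\le r\}$ with $x_0\in X$, $r\ge0$. *)

From Stdlib Require Import Reals List.
From Coquelicot Require Import Coquelicot.
Open Scope R_scope.

Definition is_metric {M : Type} (d : M -> M -> R) : Prop :=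
  (forall x y, 0 <= d x y) /\
  (forall x y, d x y = 0 <-> x = y) /\
  (forall x y, d x y = d y x) /\
  (forall x y z, d x z <= d x y + d y z).

Definition metric_coordinate_system {M : Type} (d : M -> M -> R)
  (X C : M -> Prop) : Prop :=
  is_metric d /\
  forall x y, X x -> X y -> x <> y -> exists c, C c /\ d x c <> d y c.

(* d_C(x,y) = sup_{c in C} |d(x,c) - d(y,c)|  (the sup of the empty set is 0) *)
Definition dC {M : Type} (d : M -> M -> R) (C : M -> Prop) (x y : M) : R :=
  real (Lub_Rbar (fun r => exists c, C c /\ r = Rabs (d x c - d y c))).

Definition mopen {M : Type} (X : M -> Prop) (D : M -> M -> R) (U : M -> Prop) : Prop :=
  forall x, X x -> U x -> exists e, 0 < e /\ forall y, X y -> D x y < e -> U y.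

Definition mcompact {M : Type} (X : M -> Prop) (D : M -> M -> R) (K : M -> Prop) : Prop :=
  (forall x, K x -> X x) /\
  forall (I : Type) (U : I -> M -> Prop),
    (forall i, mopen X D (U i)) ->
    (forall x, K x -> exists i, U i x) ->
    exists l : list I, forall x, K x -> exists i, In i l /\ U i x.

Definition cball {M : Type} (X : M -> Prop) (D : M -> M -> R) (x0 : M) (r : R) : M -> Prop :=
  fun x => X x /\ D x x0 <= r.

Definition mcontinuous {M : Type} (X : M -> Prop) (D1 D2 : M -> M -> R) (f : M -> M) : Prop :=
  forall x, X x -> forall eps, 0 < eps ->
    exists delta, 0 < delta /\ forall y, X y -> D1 x y < delta -> D2 (f x) (f y) < eps.

(* The identity (X,D1) -> (X,D2) is a homeomorphism: it is a bijection of X,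
   continuous, with continuous inverse (the identity (X,D2) -> (X,D1)). *)
Definition id_homeomorphism {M : Type} (X : M -> Prop) (D1 D2 : M -> M -> R) : Prop :=
  mcontinuous X D1 D2 (fun x => x) /\ mcontinuous X D2 D1 (fun x => x).

Definition locally_compact {M : Type} (X : M -> Prop) (D : M -> M -> R) : Prop :=
  forall x, X x -> exists K e, mcompact X D K /\ 0 < e /\
    forall y, X y -> D x y < e -> K y.

(* The distance [d_C] never exceeds [d], so only the continuity of the identity
   [(X,d_C) -> (X,d)] needs an argument.  Fix [x] and [eps].  Points far from
   [x] are also far in [d_C], by the triangle inequality through any single
   coordinate point.  The closed [d]-ball around [x] is compact and is covered
   by the [d]-ball of radius [eps] together with the open sets
   [{z | a < |x_c - z_c|}], which cover the rest because coordinates separate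
   points; a finite subcover yields a positive lower bound [m] for the [a]'s,
   and then [d_C(x,y) < m] forces [y] into the [eps]-ball. *)
From Stdlib Require Import Reals List Lra Classical.
From Coquelicot Require Import Coquelicot.
Open Scope R_scope.

Lemma list_pos_lower_bound {I : Type} (f : I -> R) (l : list I) :
  exists m, 0 < m /\ forall i, In i l -> 0 < f i -> m <= f i.
Proof.
  induction l as [|a l [m [Hm Hmin]]].
  - exists 1. split; [lra | intros i []].
  - destruct (Rlt_dec 0 (f a)) as [Ha|Ha].
    + exists (Rmin m (f a)). split; [now apply Rmin_pos|].
      intros i [<-|Hi] Hfi; [apply Rmin_r|].
      eapply Rle_trans; [apply Rmin_l | auto].
    + exists m. split; auto. intros i [<-|Hi] Hfi; [lra | auto].
Qed.

Section DistanceComparison.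
Variables (M : Type) (X : M -> Prop) (D1 D2 : M -> M -> R).
Hypothesis D2_le_D1 : forall x y, D2 x y <= D1 x y.

Lemma mopen_le (U : M -> Prop) : mopen X D2 U -> mopen X D1 U.
Proof.
  intros HU x Hx Ux. destruct (HU x Hx Ux) as [e [He Hball]].
  exists e. split; auto. intros y Hy Hxy. apply Hball; auto.
  pose proof (D2_le_D1 x y). lra.
Qed.

Lemma mcompact_le (K : M -> Prop) : mcompact X D1 K -> mcompact X D2 K.
Proof.
  intros [HKX Hcov]. split; auto.
  intros I U HU. apply Hcov. intro i. apply mopen_le, HU.
Qed.

Lemma mcontinuous_id_le : mcontinuous X D1 D2 (fun x => x).
Proof.
  intros x Hx eps Heps. exists eps. split; auto. intros y Hy Hxy.
  pose proof (D2_le_D1 x y). lra.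
Qed.

End DistanceComparison.

Section Coordinates.
Variables (M : Type) (d : M -> M -> R) (C : M -> Prop).
Hypothesis d_metric : is_metric d.

Lemma d_self x : d x x = 0.
Proof. apply d_metric. reflexivity. Qed.

Lemma d_sym x y : d x y = d y x.
Proof. apply d_metric. Qed.

Lemma d_triangle x y z : d x z <= d x y + d y z.
Proof. apply d_metric. Qed.

Lemma Rabs_coord_sub_le x y c : Rabs (d x c - d y c) <= d x y.
Proof.
  pose proof (d_triangle x y c). pose proof (d_triangle y x c).
  rewrite (d_sym y x) in *. apply Rabs_le; lra.
Qed.

Let coord_gaps x y := fun r => exists c, C c /\ r = Rabs (d x c - d y c).

Lemma Lub_coord_gaps_le x y : Rbar_le (Lub_Rbar (coord_gaps x y)) (d x y).
Proof.
  apply Lub_Rbar_correct. intros r [c [_ ->]]. apply Rabs_coord_sub_le.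
Qed.

Lemma dC_le x y : dC d C x y <= d x y.
Proof.
  unfold dC. fold (coord_gaps x y).
  pose proof (Lub_coord_gaps_le x y) as Hle.
  destruct (Lub_Rbar (coord_gaps x y)); simpl in *; try easy.
  apply d_metric.
Qed.

Lemma Rabs_coord_sub_le_dC x y c : C c -> Rabs (d x c - d y c) <= dC d C x y.
Proof.
  intro Hc. unfold dC. fold (coord_gaps x y).
  pose proof (Lub_coord_gaps_le x y) as Hle.
  assert (Hgap := proj1 (Lub_Rbar_correct (coord_gaps x y)) _
                    (ex_intro _ c (conj Hc eq_refl))).
  destruct (Lub_Rbar (coord_gaps x y)); simpl in *; easy.
Qed.

Lemma d_le_dC_through x y c : C c -> d x y <= 2 * d x c + dC d C x y.
Proof.
  intro Hc. pose proof (Rabs_coord_sub_le_dC x y c Hc).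
  pose proof (d_triangle x c y). rewrite (d_sym c y) in *.
  pose proof (Rabs_Ropp (d x c - d y c)). pose proof (Rle_abs (- (d x c - d y c))).
  lra.
Qed.

Lemma mopen_d_ball X x eps : mopen X d (fun z => d x z < eps).
Proof.
  intros z _ Hz. exists (eps - d x z). split; [lra|].
  intros y _ Hzy. pose proof (d_triangle x z y). lra.
Qed.

Lemma mopen_coord_gap X x c a : mopen X d (fun z => a < Rabs (d x c - d z c)).
Proof.
  intros z _ Hz. exists (Rabs (d x c - d z c) - a). split; [lra|].
  intros y _ Hzy. pose proof (Rabs_coord_sub_le z y c).
  pose proof (Rabs_triang (d x c - d y c) (d y c - d z c)).
  replace (d x c - d y c + (d y c - d z c)) with (d x c - d z c) in * by ring.
  replace (d y c - d z c) with (- (d z c - d y c)) in * by ring.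
  rewrite Rabs_Ropp in *. lra.
Qed.

Variable X : M -> Prop.
Hypothesis coords_separate :
  forall x y, X x -> X y -> x <> y -> exists c, C c /\ d x c <> d y c.

Lemma compact_dC_close_d_close (K : M -> Prop) x eps :
  mcompact X d K -> X x -> 0 < eps ->
  exists delta, 0 < delta /\ forall y, K y -> dC d C x y < delta -> d x y < eps.
Proof.
  intros [HKX Hcov] Hx Heps.
  set (U := fun (i : option (M * R)) z =>
    match i with
    | None => d x z < eps
    | Some (c, a) => C c /\ 0 < a /\ a < Rabs (d x c - d z c)
    end).
  destruct (Hcov _ U) as [l Hl].
  - intros [[c a]|]; [|apply mopen_d_ball].
    intros z Hz [Hc [Ha Hgap]].
    destruct (mopen_coord_gap X x c a z Hz Hgap) as [e [He Hball]].
    exists e. split; auto. intros y Hy Hzy. repeat split; auto.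
  - intros z Kz. destruct (Rlt_dec (d x z) eps) as [Hlt|Hge]; [now exists None|].
    assert (Hxz : x <> z) by (intros <-; rewrite d_self in Hge; lra).
    destruct (coords_separate x z Hx (HKX z Kz) Hxz) as [c [Hc Hcz]].
    assert (0 < Rabs (d x c - d z c)) by (apply Rabs_pos_lt; lra).
    exists (Some (c, Rabs (d x c - d z c) / 2)). simpl. repeat split; auto; lra.
  - destruct (list_pos_lower_bound
                (fun i => match i with None => 0 | Some (_, a) => a end) l)
      as [m [Hm Hmin]].
    exists m. split; auto. intros y Ky Hxy.
    destruct (Hl y Ky) as [[[c a]|] [Hin Hy]]; simpl in Hy; auto.
    destruct Hy as [Hc [Ha Hgap]].
    pose proof (Hmin _ Hin Ha). pose proof (Rabs_coord_sub_le_dC x y c Hc).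
    simpl in *. lra.
Qed.

Lemma coords_empty_singleton x y : ~ (exists c, C c) -> X x -> X y -> x = y.
Proof.
  intros HnoC Hx Hy. apply NNPP. intro Hxy.
  destruct (coords_separate x y Hx Hy Hxy) as [c [Hc _]]. eauto.
Qed.

Hypothesis balls_compact :
  forall x0 r, X x0 -> 0 <= r -> mcompact X d (cball X d x0 r).

Lemma mcontinuous_id_dC_d : mcontinuous X (dC d C) d (fun x => x).
Proof.
  intros x Hx eps Heps.
  destruct (classic (exists c, C c)) as [[c Hc]|HnoC].
  2:{ exists 1. split; [lra|]. intros y Hy _.
      rewrite <- (coords_empty_singleton x y HnoC Hx Hy), d_self. auto. }
  set (r := 2 * d x c + 1).
  assert (Hr : 0 <= r) by (pose proof (proj1 d_metric x c); unfold r; lra).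
  destruct (compact_dC_close_d_close _ x eps (balls_compact x r Hx Hr) Hx Heps)
    as [delta [Hdelta Hclose]].
  exists (Rmin delta 1). split; [now apply Rmin_pos; lra|].
  intros y Hy Hxy. pose proof (Rmin_l delta 1). pose proof (Rmin_r delta 1).
  apply Hclose; [|lra]. split; auto. rewrite d_sym.
  pose proof (d_le_dC_through x y c Hc). unfold r. lra.
Qed.

Lemma locally_compact_dC : locally_compact X (dC d C).
Proof.
  intros x Hx.
  destruct (mcontinuous_id_dC_d x Hx 1 ltac:(lra)) as [e [He Hnear]].
  exists (cball X d x 1), e. split; [|split; [exact He|]].
  - apply (mcompact_le M X d (dC d C) dC_le), balls_compact; auto; lra.
  - intros y Hy Hxy. split; auto. rewrite d_sym. left. now apply Hnear.
Qed.

End Coordinates.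

Theorem theorem7p1 (M : Type) (d : M -> M -> R) (X C : M -> Prop) :
  metric_coordinate_system d X C ->
  (forall x0 r, X x0 -> 0 <= r -> mcompact X d (cball X d x0 r)) ->
  id_homeomorphism X d (dC d C) /\ locally_compact X (dC d C).
Proof.
  intros [Hm Hsep] Hballs.
  split; [split|].
  - apply mcontinuous_id_le, dC_le, Hm.
  - exact (mcontinuous_id_dC_d M d C Hm X Hsep Hballs).
  - exact (locally_compact_dC M d C Hm X Hsep Hballs).
Qed.
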